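(* Let $\mu$ be a nonnegative finite measure on the Borel subsets of $[0,\infty)$, and for $\nu\ge 0$ define $|||\mu|||_\nu\in[0,\infty]$ by $|||\mu|||_\nu^2:=\sup_{t>0}t^{-2\nu}\mu([0,t))$. Let $\nu>0$. Then $$\mu([0,\Lambda))+\Lambda^{2\gamma}\int_{[\Lambda,\infty)}\lambda^{-2\gamma}\,d\mu(\lambda)\le\frac{\gamma}{\gamma-\nu}\Lambda^{2\nu}|||\mu|||_\nu^2\quad\text{for all }\Lambda>0\text{ and all }\gamma>\nu,$$ and $$\int_{[0,\Lambda)}\lambda^{-2r}\,d\mu(\lambda)\le\frac{r+\nu}{\nu}\Lambda^{2\nu}|||\mu|||_{r+\nu}^2\quad\text{for all }\Lambda>0\text{ and all }r\ge 0,$$ whenever the respective right-hand side is finite. *)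

From HB Require Import structures.
From mathcomp Require Import all_boot all_order all_algebra.
From mathcomp Require Import all_classical all_reals all_analysis.
Set Implicit Arguments. Unset Strict Implicit. Unset Printing Implicit Defensive.
Import Order.TTheory GRing.Theory Num.Theory.
Import numFieldNormedType.Exports.
Local Open Scope classical_set_scope.
Local Open Scope ring_scope.
Local Open Scope ereal_scope.

Definition tnorm2 {R : realType} (mu : set R -> \bar R) (nu : R) : \bar R :=
  ereal_sup [set ((t `^ (- (2 * nu)))%:E * mu [set` `[0%R, t[]) | t in [set` `]0%R, +oo[] ].

Definition lam_negpow {R : realType} (s x : R) : \bar R :=
  if x == 0%R then (if s == 0%R then 1 else +oo) else (x `^ (- s))%:E.

From HB Require Import structures.
From mathcomp Require Import all_boot all_order all_algebra.
From mathcomp Require Import all_classical all_reals all_analysis.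
From mathcomp Require Import measurable_realfun ring.
Import Order.TTheory GRing.Theory Num.Theory.
Import numFieldNormedType.Exports.
Local Open Scope classical_set_scope.
Local Open Scope ring_scope.

(* Both estimates are layer-cake arguments.  For x >= 0,
   max(x, L)^(-2g) = int_{s > x, s >= L} 2g s^(-2g-1) ds, and for 0 < x < L,
   x^(-2r) - L^(-2r) = int_{1/L <= u < 1/x} 2r u^(2r-1) du.  Integrating against
   mu and exchanging the integrals (Tonelli) turns the left-hand sides into
   integrals of the distribution function t |-> mu([0,t)), which is bounded by
   t^(2 nu) |||mu|||_nu^2; the remaining one-dimensional integrals are computed
   by the fundamental theorem of calculus.  In the second estimate the atom of mu
   at 0, where lambda^(-2r) = +oo, is ruled out by the same growth bound. *)

Section powR_calculus.
Context {R : realType}.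

Lemma powRV (x p : R) : 0 < x -> x^-1 `^ p = x `^ (- p).
Proof. by move=> x0; rewrite -powR_inv1 ?ltW// -powRrM mulN1r. Qed.

Lemma gt0_ger_powRN (p x y : R) : 0 <= p -> 0 < x -> x <= y -> y `^ (- p) <= x `^ (- p).
Proof.
move=> p0 x0 xy; rewrite !powRN lef_pV2 ?posrE ?powR_gt0 ?(lt_le_trans x0)//.
by apply: ge0_ler_powR; rewrite // nnegrE ltW// (lt_le_trans x0).
Qed.

Lemma powR_continuous (p x : R) : 0 < x -> {for x, continuous (fun y : R => y `^ p)}.
Proof.
move=> x0; apply: differentiable_continuous; apply/derivable1_diffP.
by apply: derivable_powR; rewrite in_itv/= x0.
Qed.

Lemma cvgy_powRN (p : R) : 0 < p -> x `^ (- p) @[x --> +oo] --> 0.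
Proof.
move=> p0; apply/cvgrPdist_le => e e0; near=> x.
rewrite sub0r normrN ger0_norm ?powR_ge0// powRN -(invrK e).
have xe : e^-1 `^ p^-1 <= x by near: x; exact: nbhs_pinfty_ge.
have x0 : 0 < x by apply: lt_le_trans xe; rewrite powR_gt0// invr_gt0.
rewrite lef_pV2 ?posrE ?powR_gt0 ?invr_gt0//.
have := @ge0_ler_powR R p (ltW p0) _ _ _ _ xe.
rewrite -powRrM mulVf ?gt_eqF// powRr1; last by rewrite invr_ge0 ltW.
by apply; rewrite nnegrE ltW// powR_gt0// invr_gt0.
Unshelve. all: by end_near.
Qed.

Lemma integral_itvcy_powR (c p : R) : 0 < c -> 0 < p ->
  (\int[lebesgue_measure]_(x in `[c, +oo[) (p * x `^ (- p - 1))%:E = (c `^ (- p))%:E)%E.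
Proof.
move=> c0 p0.
have dF (x : R) : 0 < x -> is_derive x 1 (fun y : R => - y `^ (- p)) (p * x `^ (- p - 1)).
  by move=> x0; have := is_deriveN (is_derive1_powR (- p) x0); rewrite mulNr opprK.
have cont_f (x : R) : 0 < x -> {for x, continuous (fun y : R => p * y `^ (- p - 1))}.
  move=> x0; apply: (@continuousM _ _ (cst p)); first exact: cst_continuous.
  exact: powR_continuous.
rewrite (@ge0_continuous_FTC2y R _ (fun y : R => - y `^ (- p)) c 0).
- by rewrite sub0e EFinN oppeK.
- by move=> x _; rewrite mulr_ge0 ?powR_ge0// ltW.
- apply/continuous_within_itvcyP; split.
    by move=> x; rewrite in_itv/= andbT => cx; apply: cont_f; apply: lt_trans cx.
  by apply: cvg_at_right_filter; exact: cont_f.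
- by rewrite -oppr0; apply: cvgN; exact: cvgy_powRN.
- by move=> x cx; have [] := dF x (lt_trans c0 cx).
- by apply: cvg_at_right_filter; apply: cvgN; exact: powR_continuous.
- move=> x; rewrite in_itv/= andbT => cx.
  by rewrite derive1E; have [_ ->] := dF x (lt_trans c0 cx).
Qed.

Lemma integral_itvco_powR (a b q : R) : 0 < a -> a < b -> 0 < q ->
  (\int[lebesgue_measure]_(u in `[a, b[) (q * u `^ (q - 1))%:E = (b `^ q - a `^ q)%:E)%E.
Proof.
move=> a0 ab q0.
rewrite integral_itv_bndo_bndc; last first.
  apply/measurable_EFinP; apply: measurable_funTS.
  by apply: measurable_funM => //; exact: measurable_powR.
rewrite (@continuous_FTC2 _ _ (fun y : R => y `^ q)) ?EFinB//.
- apply: continuous_in_subspaceT => x; rewrite inE/= in_itv/= => /andP[ax _].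
  apply: (@continuousM _ _ (cst q) (fun y : R => y `^ (q - 1))); first exact: cst_continuous.
  exact: powR_continuous (lt_le_trans a0 ax).
- split.
  + move=> x; rewrite in_itv/= => /andP[ax _].
    by apply: derivable_powR; rewrite in_itv/= andbT (lt_trans a0 ax).
  + by apply: cvg_at_right_filter; exact: powR_continuous.
  + by apply: cvg_at_left_filter; exact: powR_continuous (lt_trans a0 ab).
- move=> x; rewrite in_itv/= => /andP[ax _].
  by rewrite powR_derive1// in_itv/= andbT (lt_trans a0 ax).
Qed.

End powR_calculus.

Section tnorm2_bounds.
Context {R : realType}.
Local Open Scope ereal_scope.

Definition growth_bounded (mu : set R -> \bar R) (a m : R) : Prop :=
  forall t, (0 < t)%R -> mu [set` `[0%R, t[] <= (m * t `^ a)%:E.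

Lemma tnorm2_ge_ratio (mu : set R -> \bar R) (nu t : R) : (0 < t)%R ->
  (t `^ (- (2 * nu)))%:E * mu [set` `[0%R, t[] <= tnorm2 mu nu.
Proof. by move=> t0; apply: ereal_sup_ubound; exists t; rewrite //= in_itv/= t0. Qed.

Lemma tnorm2_ge0 (mu : {measure set R -> \bar R}) (nu : R) : 0 <= tnorm2 mu nu.
Proof.
apply: le_trans _ (tnorm2_ge_ratio mu nu _ ltr01).
by rewrite mule_ge0// lee_fin powR_ge0.
Qed.

Lemma tnorm2_growth (mu : {measure set R -> \bar R}) (nu t : R) : (0 < t)%R ->
  mu [set` `[0%R, t[] <= (t `^ (2 * nu))%:E * tnorm2 mu nu.
Proof.
move=> t0; have tp0 : 0 <= (t `^ (2 * nu))%:E by rewrite lee_fin powR_ge0.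
apply: le_trans _ (lee_wpmul2l tp0 (tnorm2_ge_ratio mu nu _ t0)).
by rewrite muleA -EFinM powRN mulfV ?mul1e// gt_eqF// powR_gt0.
Qed.

Lemma fin_tnorm2_growth (mu : {measure set R -> \bar R}) (nu : R) :
  tnorm2 mu nu < +oo -> exists2 m : R, tnorm2 mu nu = m%:E & growth_bounded mu (2 * nu) m.
Proof.
move=> fin; have M_fin : tnorm2 mu nu \is a fin_num by rewrite ge0_fin_numE ?tnorm2_ge0.
exists (fine (tnorm2 mu nu)); first by rewrite fineK.
by move=> t t0; rewrite mulrC EFinM fineK//; exact: tnorm2_growth.
Qed.

Lemma growth_bounded_ge0 (mu : {measure set R -> \bar R}) (a m : R) :
  growth_bounded mu a m -> (0 <= m)%R.
Proof.
by move=> growth; have := le_trans (measure_ge0 mu _) (growth 1%R ltr01); rewrite powR1 mulr1.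
Qed.

Lemma growth_bounded_atom0 (mu : {finite_measure set R -> \bar R}) (a m : R) : (0 < a)%R ->
  growth_bounded mu a m -> mu [set 0%R] = 0.
Proof.
move=> a0 growth; have z_fin : mu [set 0%R] \is a fin_num by exact: fin_num_measure.
apply/eqP; rewrite eq_le measure_ge0 andbT -(fineK z_fin) lee_fin.
have cvg0 : (fun t : R => m * t `^ a)%R @ 0%R^'+ --> 0%R.
  by rewrite -[X in _ --> X](mulr0 m); exact: cvgMl_tmp (powR_cvg0 a0).
apply: (cvgr_to_ge cvg0).
near=> t; have t0 : (0 < t)%R by near: t; exact: nbhs_right_gt.
rewrite -lee_fin fineK//; apply: le_trans _ (growth t t0).
by apply: le_measure; rewrite ?inE// => _ ->; rewrite /= in_itv/= lexx t0.
Unshelve. all: by end_near.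
Qed.

End tnorm2_bounds.

Section fubini_tonelli_sections.
Local Open Scope ereal_scope.

Lemma integral_if_cst d (T : measurableType d) (R : realType)
    (nu : {measure set T -> \bar R}) (P : pred T) (c : R) :
  measurable [set x | P x] -> \int[nu]_x (if P x then c%:E else 0) = c%:E * nu [set x | P x].
Proof.
move=> mP; rewrite -integral_cst// [RHS]integral_mkcond.
by apply: eq_integral => x _; rewrite patchE mem_setE.
Qed.

Lemma measurable_section_pred {d1 d2} {T1 : measurableType d1} {T2 : measurableType d2}
    {P : T1 -> T2 -> bool} {u : T2} :
  measurable_fun setT (fun z : T1 * T2 => P z.1 z.2) -> measurable [set x | P x u].
Proof.
by move=> mP; have := measurable_fun_pair1 u mP measurableT (Y := [set true]) I; rewrite setTI.
Qed.

Context {R : realType} (mu : {finite_measure set R -> \bar R}).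

Lemma fubini_tonelli_section_le (P : R -> R -> bool) (k b : R -> R) (D : set R) :
  measurable D -> measurable_fun setT (fun z : R * R => P z.1 z.2) ->
  measurable_fun setT k -> (forall u, 0 <= k u)%R -> measurable_fun D b ->
  (forall x u, P x u -> D u) ->
  (forall u, D u -> (k u)%:E * mu [set x | P x u] <= (b u)%:E) ->
  \int[mu]_x \int[lebesgue_measure]_u (if P x u then (k u)%:E else 0)
    <= \int[lebesgue_measure]_(u in D) (b u)%:E.
Proof.
move=> mD mP mk k0 mb PD kb.
pose f (z : R * R) := if P z.1 z.2 then (k z.2)%:E else 0.
have mf : measurable_fun setT f.
  apply: measurable_fun_ifT => //; apply/measurable_EFinP.
  exact: measurableT_comp mk measurable_snd.
have f0 z : 0 <= f z by rewrite /f; case: ifP; rewrite ?lee_fin.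
rewrite (fubini_tonelli (m1 := mu) (m2 := lebesgue_measure) f mf f0).
have -> : \int[lebesgue_measure]_u \int[mu]_x f (x, u) =
          \int[lebesgue_measure]_(u in D) \int[mu]_x f (x, u).
  rewrite [RHS]integral_mkcond; apply: eq_integral => u _; rewrite patchE.
  case: ifPn => // /negP; rewrite inE => Du.
  by apply: integral0_eq => x _; rewrite /f/=; case: ifP => // /PD.
apply: ge0_le_integral => //.
- by move=> u _; exact: integral_ge0.
- exact: measurable_funTS (measurable_fun_fubini_tonelli_G _ mf f0).
- exact/measurable_EFinP.
- move=> u Du; rewrite /f/= integral_if_cst; first exact: kb.
  exact: measurable_section_pred mP.
Qed.

End fubini_tonelli_sections.

Section tail_estimate.
Context {R : realType}.
Local Open Scope ereal_scope.

Lemma integral_tail_kernel (L p x : R) : (0 < L)%R -> (0 < p)%R ->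
  \int[lebesgue_measure]_s (if (0 <= x)%R && (L <= s)%R && (x < s)%R
     then (p * s `^ (- p - 1))%:E else 0)
  = if (0 <= x)%R then ((Num.max x L) `^ (- p))%:E else 0.
Proof.
move=> L0 p0; have [x0|x0] := leP 0%R x; last first.
  by rewrite integral0_eq// => s _; rewrite andFb.
rewrite -integral_itvcy_powR ?lt_max ?L0 ?orbT//.
have [Lx|xL] := leP L x.
  rewrite -integral_itv_obnd_cbnd; last first.
    apply/measurable_EFinP; apply: measurable_funM => //.
    exact: measurable_funTS (measurable_powR _).
  rewrite [RHS]integral_mkcond; apply: eq_integral => s _; rewrite patchE mem_setE in_itv/= andbT.
  by case: (ltP x s) => xs; rewrite ?andbT ?andbF// (le_trans Lx (ltW xs)).
rewrite [RHS]integral_mkcond; apply: eq_integral => s _.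
rewrite patchE mem_setE in_itv/= andbT.
by case: (leP L s) => Ls; rewrite ?andbT ?andbF// (lt_le_trans xL Ls).
Qed.

Lemma integral_layer_tail (mu : {measure set R -> \bar R}) (L p : R) :
  (0 < L)%R -> (0 < p)%R ->
  \int[mu]_x \int[lebesgue_measure]_s (if (0 <= x)%R && (L <= s)%R && (x < s)%R
     then (p * s `^ (- p - 1))%:E else 0)
  = (L `^ (- p))%:E * mu [set` `[0%R, L[] + \int[mu]_(x in `[L, +oo[) (x `^ (- p))%:E.
Proof.
move=> L0 p0; under eq_integral do rewrite integral_tail_kernel//.
transitivity (\int[mu]_x ((L `^ (- p))%:E * (\1_(`[0%R, L[%classic) x)%:E +
    ((fun x => (x `^ (- p))%:E) \_ `[L, +oo[%classic) x)).
  apply: eq_integral => x _; rewrite indicE patchE !mem_setE !in_itv/= andbT.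
  case: (leP 0%R x) => x0 /=; case: (ltP x L) => xL /=.
  - by rewrite mule1 adde0.
  - by rewrite mule0 add0e.
  - by rewrite mule0 adde0.
  - by have := lt_le_trans x0 (le_trans (ltW L0) xL); rewrite ltxx.
rewrite ge0_integralD//; last 4 first.
- by move=> x _; rewrite mule_ge0// lee_fin powR_ge0.
- apply: emeasurable_funM => //.
  by apply/measurable_EFinP; exact: measurable_indic.
- by move=> x _; rewrite patchE; case: ifP => // _; rewrite lee_fin powR_ge0.
- apply/(measurable_restrictT _ _).1 => //.
  by apply/measurable_EFinP; exact: measurable_funTS (measurable_powR _).
rewrite ge0_integralZl_EFin ?powR_ge0//; last first.
  by apply/measurable_EFinP; exact: measurable_indic.
by rewrite integral_indic// setIT [in RHS]integral_mkcond.
Qed.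

Lemma layer_tail_le (mu : {finite_measure set R -> \bar R}) (a p L m : R) :
  (0 < L)%R -> (0 < p)%R -> (a < p)%R ->
  growth_bounded mu a m ->
  \int[mu]_x \int[lebesgue_measure]_s (if (0 <= x)%R && (L <= s)%R && (x < s)%R
     then (p * s `^ (- p - 1))%:E else 0)
  <= (m * p / (p - a) * L `^ (a - p))%:E.
Proof.
move=> L0 p0 ap growth; have q0 : (0 < p - a)%R by rewrite subr_gt0.
have m0 := growth_bounded_ge0 mu a m growth.
pose C := (m * p / (p - a))%R.
pose P x s := ((0 <= x) && (L <= s) && (x < s))%R.
have mP : measurable_fun setT (fun z : R * R => P z.1 z.2).
  apply: measurable_and; first apply: measurable_and.
  - exact: measurable_fun_ler measurable_fst.
  - exact: measurable_fun_ler measurable_snd.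
  - exact: measurable_fun_ltr measurable_fst measurable_snd.
apply: le_trans (fubini_tonelli_section_le mu P (fun s => p * s `^ (- p - 1))%R
  (fun s => C * ((p - a) * s `^ (- (p - a) - 1)))%R `[L, +oo[%classic _ _ _ _ _ _ _) _.
- exact: measurable_itv.
- exact: mP.
- by apply: measurable_funM => //; exact: measurable_powR.
- by move=> s; rewrite mulr_ge0 ?powR_ge0// ltW.
- apply: measurable_funTS; apply: measurable_funM => //.
  by apply: measurable_funM => //; exact: measurable_powR.
- by move=> x s /andP[/andP[_ Ls] _]; rewrite /= in_itv/= Ls.
- move=> s; rewrite /= in_itv/= andbT => Ls; have s0 : (0 < s)%R := lt_le_trans L0 Ls.
  have ks0 : 0 <= (p * s `^ (- p - 1))%:E by rewrite lee_fin mulr_ge0 ?powR_ge0// ltW.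
  apply: le_trans (lee_wpmul2l ks0 (le_trans _ (growth s s0))) _.
    apply: le_measure; rewrite ?inE//; first exact: (@measurable_section_pred _ _ _ _ P _ mP).
    by move=> x /andP[/andP[x0 _] xs]; rewrite /= in_itv/= x0.
  rewrite -EFinM lee_fin le_eqVlt; apply/orP; left; apply/eqP.
  have -> : (- (p - a) - 1 = (- p - 1) + a)%R by ring.
  rewrite [in RHS]powRD ?(gt_eqF s0) ?implybT//.
  by rewrite /C; field; rewrite gt_eqF.
under eq_integral do rewrite EFinM.
rewrite ge0_integralZl_EFin//.
- by rewrite integral_itvcy_powR// -EFinM opprB.
- by move=> x _; rewrite lee_fin mulr_ge0 ?powR_ge0// ltW.
- by apply/measurable_EFinP; apply: measurable_funTS; apply: measurable_funM.
- by rewrite /C mulr_ge0 ?invr_ge0 ?mulr_ge0// ltW.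
Qed.

Lemma tail_growth_bound (mu : {finite_measure set R -> \bar R}) (nu g L m : R) :
  (0 < nu)%R -> (nu < g)%R -> (0 < L)%R ->
  growth_bounded mu (2 * nu) m ->
  mu [set` `[0%R, L[] + (L `^ (2 * g))%:E * \int[mu]_(x in `[L, +oo[) (x `^ (- (2 * g)))%:E
  <= (g / (g - nu) * L `^ (2 * nu) * m)%:E.
Proof.
move=> nu0 nug L0 growth; have g0 : (0 < g)%R := lt_trans nu0 nug.
have p0 : (0 < 2 * g)%R by rewrite mulr_gt0.
have ap : (2 * nu < 2 * g)%R by rewrite ltr_pM2l.
have := layer_tail_le mu _ _ _ _ L0 p0 ap growth.
rewrite integral_layer_tail ?mulr_gt0//.
set F := mu _; set I := \int[mu]_(x in _) _ => layer_bound.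
have I0 : 0 <= I by apply: integral_ge0 => x _; rewrite lee_fin powR_ge0.
rewrite -(@lee_pmul2l _ (L `^ (- (2 * g)))%:E) ?lte_fin ?powR_gt0//.
rewrite ge0_muleDr ?measure_ge0 ?mule_ge0 ?lee_fin ?powR_ge0// muleA -EFinM.
rewrite powRN mulVf ?gt_eqF ?powR_gt0// mul1e -powRN.
apply: le_trans layer_bound _; rewrite -EFinM lee_fin le_eqVlt; apply/orP; left; apply/eqP.
rewrite powRB ?(gt_eqF L0) ?implybT// powRN.
field; rewrite ?subr_eq0 ?gt_eqF ?powR_gt0 ?subr_gt0 ?mulr_gt0//.
Qed.

End tail_estimate.

Section head_estimate.
Context {R : realType}.
Local Open Scope ereal_scope.

Lemma integral_head_kernel (L p x : R) : (0 < L)%R -> (0 < p)%R ->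
  \int[lebesgue_measure]_u (if (0 < x)%R && (x < L)%R && (L^-1 <= u)%R && (u * x < 1)%R
     then (p * u `^ (p - 1))%:E else 0)
  = if (0 < x)%R && (x < L)%R then (x `^ (- p) - L `^ (- p))%:E else 0.
Proof.
move=> L0 p0; case: ifPn => [/andP[x0 xL]|xF]; last first.
  by apply: integral0_eq.
rewrite -!powRV// -integral_itvco_powR ?invr_gt0 ?ltf_pV2//.
rewrite [RHS]integral_mkcond; apply: eq_integral => u _.
by rewrite patchE mem_setE in_itv/= -[(x^-1)%R]div1r ltr_pdivlMr.
Qed.

Lemma integral_layer_head (mu : {measure set R -> \bar R}) (L p : R) :
  (0 < L)%R -> (0 < p)%R ->
  \int[mu]_(x in `]0%R, L[) (x `^ (- p))%:E
  = (L `^ (- p))%:E * mu [set` `]0%R, L[] +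
    \int[mu]_x \int[lebesgue_measure]_u
      (if (0 < x)%R && (x < L)%R && (L^-1 <= u)%R && (u * x < 1)%R
       then (p * u `^ (p - 1))%:E else 0).
Proof.
move=> L0 p0; under [in RHS]eq_integral do rewrite integral_head_kernel//.
rewrite [LHS]integral_mkcond.
transitivity (\int[mu]_x ((L `^ (- p))%:E * (\1_(`]0%R, L[%classic) x)%:E +
   (if (0 < x)%R && (x < L)%R then (x `^ (- p) - L `^ (- p))%:E else 0))).
  apply: eq_integral => x _; rewrite patchE indicE mem_setE in_itv/=.
  case: ifP => _; last by rewrite mule0 adde0.
  by rewrite mule1 -EFinD subrKC.
rewrite ge0_integralD//; last 4 first.
- by move=> x _; rewrite mule_ge0// lee_fin powR_ge0.
- apply: emeasurable_funM => //.
  by apply/measurable_EFinP; exact: measurable_indic.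
- move=> x _; case: ifP => // /andP[x0 xL].
  by rewrite lee_fin subr_ge0 gt0_ger_powRN ?ltW.
- apply: measurable_fun_ifT => //.
    by apply: measurable_and; apply: measurable_fun_ltr.
  by apply/measurable_EFinP; apply: measurable_funB => //; exact: measurable_powR.
rewrite ge0_integralZl_EFin ?powR_ge0//; last first.
  by apply/measurable_EFinP; exact: measurable_indic.
by rewrite integral_indic// setIT.
Qed.

Lemma layer_head_le (mu : {finite_measure set R -> \bar R}) (a p L m : R) :
  (0 < L)%R -> (0 < p)%R -> (p < a)%R ->
  growth_bounded mu a m ->
  \int[mu]_x \int[lebesgue_measure]_u
      (if (0 < x)%R && (x < L)%R && (L^-1 <= u)%R && (u * x < 1)%R
       then (p * u `^ (p - 1))%:E else 0)
  <= (m * p / (a - p) * L `^ (a - p))%:E.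
Proof.
move=> L0 p0 pa growth; have q0 : (0 < a - p)%R by rewrite subr_gt0.
have m0 := growth_bounded_ge0 mu a m growth.
pose C := (m * p / (a - p))%R.
pose P x u := ((0 < x) && (x < L) && (L^-1 <= u) && (u * x < 1))%R.
have mP : measurable_fun setT (fun z : R * R => P z.1 z.2).
  apply: measurable_and; first apply: measurable_and; first apply: measurable_and.
  - exact: measurable_fun_ltr measurable_fst.
  - exact: measurable_fun_ltr measurable_fst _.
  - exact: measurable_fun_ler measurable_snd.
  - apply: measurable_fun_ltr => //.
    exact: measurable_funM measurable_snd measurable_fst.
apply: le_trans (fubini_tonelli_section_le mu P (fun u => p * u `^ (p - 1))%R
  (fun u => C * ((a - p) * u `^ (- (a - p) - 1)))%R `[L^-1, +oo[%classic%R _ _ _ _ _ _ _) _.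
- exact: measurable_itv.
- exact: mP.
- by apply: measurable_funM => //; exact: measurable_powR.
- by move=> u; rewrite mulr_ge0 ?powR_ge0// ltW.
- apply: measurable_funTS; apply: measurable_funM => //.
  by apply: measurable_funM => //; exact: measurable_powR.
- by move=> x u /andP[/andP[_ Lu] _]; rewrite /= in_itv/= Lu.
- move=> u; rewrite /= in_itv/= andbT => Lu.
  have u0 : (0 < u)%R by apply: lt_le_trans Lu; rewrite invr_gt0.
  have ui0 : (0 < u^-1)%R by rewrite invr_gt0.
  have ks0 : 0 <= (p * u `^ (p - 1))%:E by rewrite lee_fin mulr_ge0 ?powR_ge0// ltW.
  apply: le_trans (lee_wpmul2l ks0 (le_trans _ (growth _ ui0))) _.
    apply: le_measure; rewrite ?inE//; first exact: (@measurable_section_pred _ _ _ _ P _ mP).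
    move=> x /andP[/andP[/andP[x0 _] _] ux]; rewrite /= in_itv/= (ltW x0).
    by rewrite -[(u^-1)%R]mulr1 ltr_pdivlMl.
  rewrite -EFinM lee_fin le_eqVlt; apply/orP; left; apply/eqP.
  have -> : (- (a - p) - 1 = (p - 1) + - a)%R by ring.
  rewrite powRV// [in RHS]powRD ?(gt_eqF u0) ?implybT//.
  by rewrite /C; field; rewrite gt_eqF.
under eq_integral do rewrite EFinM.
rewrite ge0_integralZl_EFin//.
- by rewrite integral_itvcy_powR ?invr_gt0// -EFinM powRV// opprK.
- by move=> x _; rewrite lee_fin mulr_ge0 ?powR_ge0// ltW.
- by apply/measurable_EFinP; apply: measurable_funTS; apply: measurable_funM.
- by rewrite /C mulr_ge0 ?invr_ge0 ?mulr_ge0// ltW.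
Qed.

Lemma integral_lam_negpow0 (mu : {measure set R -> \bar R}) (L : R) :
  \int[mu]_(x in `[0%R, L[) lam_negpow 0 x = mu [set` `[0%R, L[].
Proof.
rewrite -[RHS]mul1e -integral_cst//; apply: eq_integral => x _.
by rewrite /lam_negpow eqxx oppr0 powRr0; case: ifP.
Qed.

Lemma integral_lam_negpow_itvco (mu : {measure set R -> \bar R}) (s L : R) :
  (0 < L)%R -> mu [set 0%R] = 0 ->
  \int[mu]_(x in `[0%R, L[) lam_negpow s x = \int[mu]_(x in `]0%R, L[) (x `^ (- s))%:E.
Proof.
move=> L0 mu0.
have negpowE x : `]0%R, L[%classic x -> lam_negpow s x = (x `^ (- s))%:E.
  by rewrite /= in_itv/= => /andP[x0 _]; rewrite /lam_negpow gt_eqF.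
have -> : [set` `[0%R, L[] = [set 0%R] `|` [set` `]0%R, L[].
  apply/seteqP; split => x /=; rewrite !in_itv/=.
    by move=> /andP[]; rewrite le_eqVlt => /orP[/eqP <-|->]; [left|right].
  by case=> [->|/andP[/ltW -> ->]]; rewrite ?lexx.
rewrite ge0_integral_setU//.
- rewrite null_set_integral// ?add0e; last exact: measurable_fun_set1.
  by apply: eq_integral => x /[!inE] /negpowE.
- apply/measurable_funU => //; split; first exact: measurable_fun_set1.
  apply: (eq_measurable_fun (fun x : R => (x `^ (- s))%:E)).
    by move=> x /[!inE] /negpowE ->.
  by apply/measurable_EFinP; exact: measurable_funTS (measurable_powR _).
- by move=> x _; rewrite /lam_negpow; case: ifP => _; [case: ifP|rewrite lee_fin powR_ge0].
- by apply/disj_set2P; apply/seteqP; split => // x /= [->]; rewrite in_itv/= ltxx.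
Qed.

Lemma head_growth_bound (mu : {finite_measure set R -> \bar R}) (nu r L m : R) :
  (0 < nu)%R -> (0 < r)%R -> (0 < L)%R ->
  growth_bounded mu (2 * (r + nu)) m ->
  \int[mu]_(x in `[0%R, L[) lam_negpow (2 * r) x <= ((r + nu) / nu * L `^ (2 * nu) * m)%:E.
Proof.
move=> nu0 r0 L0 growth.
have a0 : (0 < 2 * (r + nu))%R by rewrite mulr_gt0 ?addr_gt0.
have p0 : (0 < 2 * r)%R by rewrite mulr_gt0.
have pa : (2 * r < 2 * (r + nu))%R by rewrite ltr_pM2l// ltrDl.
have mu0 := growth_bounded_atom0 mu _ _ a0 growth.
rewrite integral_lam_negpow_itvco// integral_layer_head//.
have mu_head : mu [set` `]0%R, L[] <= (m * L `^ (2 * (r + nu)))%:E.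
  apply: le_trans (growth L L0); apply: le_measure; rewrite ?inE//.
  by move=> x /=; rewrite !in_itv/= => /andP[/ltW -> ->].
have Lp0 : 0 <= (L `^ (- (2 * r)))%:E by rewrite lee_fin powR_ge0.
apply: le_trans (leeD (lee_wpmul2l Lp0 mu_head) (layer_head_le mu _ _ _ _ L0 p0 pa growth)) _.
rewrite -EFinM -EFinD lee_fin le_eqVlt; apply/orP; left; apply/eqP.
have -> : (2 * (r + nu) - 2 * r = 2 * nu)%R by ring.
rewrite mulrCA -powRD ?(gt_eqF L0) ?implybT//.
have -> : (- (2 * r) + 2 * (r + nu) = 2 * nu)%R by ring.
by field; rewrite gt_eqF.
Qed.

End head_estimate.

Local Open Scope ereal_scope.

Theorem lemma1 (R : realType) (mu : {finite_measure set R -> \bar R})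
  (mu_supp : mu [set` `]-oo, 0%R[] = 0) (nu : R) (nu_gt0 : (0 < nu)%R) :
  (forall (Lam gam : R), (0 < Lam)%R -> (nu < gam)%R ->
     tnorm2 mu nu < +oo ->
     mu [set` `[0%R, Lam[] + (Lam `^ (2 * gam))%:E *
        \int[mu]_(x in `[Lam, +oo[) (x `^ (- (2 * gam)))%:E
     <= (gam / (gam - nu))%:E * (Lam `^ (2 * nu))%:E * tnorm2 mu nu)
  /\
  (forall (Lam r : R), (0 < Lam)%R -> (0 <= r)%R ->
     tnorm2 mu (r + nu) < +oo ->
     \int[mu]_(x in `[0%R, Lam[) lam_negpow (2 * r) x
     <= ((r + nu) / nu)%:E * (Lam `^ (2 * nu))%:E * tnorm2 mu (r + nu)).
Proof.
split=> [Lam gam L0 nug /fin_tnorm2_growth[m -> growth]|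
         Lam r L0 r0 /fin_tnorm2_growth[m -> growth]]; rewrite -!EFinM.
  exact: tail_growth_bound.
have [r_gt0|r_le0] := ltP 0%R r; first exact: head_growth_bound.
have r_eq0 : r = 0%R by apply/eqP; rewrite eq_le r_le0 r0.
rewrite r_eq0 mulr0 integral_lam_negpow0 add0r divff ?gt_eqF// mul1r mulrC.
by have := growth Lam L0; rewrite r_eq0 add0r.
Qed.
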